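(* Let $\mathcal{C}$ be a class of groups that contains a root class $\mathcal{R}$. Suppose that (1) every $\mathcal{R}$-by-$\mathcal{C}$ group belongs to $\mathcal{C}$; (2) for every group in $\mathcal{C}$ there is a group in $\mathcal{R}$ of the same cardinality. Then every group $G$ having a normal subgroup $N$ that is residually $\mathcal{R}$ with $G/N\in\mathcal{C}$ is residually $\mathcal{C}$.
   Context: A class of groups is a family of groups closed under isomorphism. A group $G$ is residually $\mathcal{C}$ if for every $g\in G\setminus\{e\}$ there exist $C\in\mathcal{C}$ and a surjective homomorphism $\varphi\colon G\to C$ with $\varphi(g)\neq e$. A root class is a non-trivial class $\mathcal{R}$ closed under subgroups and finite direct products satisfying the Gruenberg condition: for any chain $K\trianglelefteq H\trianglelefteq G$ with $G/H, H/K\in\mathcal{R}$ there is $L\trianglelefteq G$ with $L\subseteq K$ and $G/L\in\mathcal{R}$. A group is $\mathcal{A}$-by-$\mathcal{B}$ if it has a normal subgroup in $\mathcal{A}$ with quotient in $\mathcal{B}$. *)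

From Stdlib Require Import ProofIrrelevance.

Record group := Group {
  carrier :> Type;
  mul : carrier -> carrier -> carrier;
  one : carrier;
  inv : carrier -> carrier;
  mulA : forall x y z, mul x (mul y z) = mul (mul x y) z;
  mul1g : forall x, mul one x = x;
  mulg1 : forall x, mul x one = x;
  mulVg : forall x, mul (inv x) x = one;
  mulgV : forall x, mul x (inv x) = one
}.

Arguments mul {g} _ _.
Arguments one {g}.
Arguments inv {g} _.

Definition is_hom (G H : group) (f : G -> H) : Prop :=
  forall x y, f (mul x y) = mul (f x) (f y).

Definition surj {A B : Type} (f : A -> B) : Prop := forall y, exists x, f x = y.

Definition isomorphic (G H : group) : Prop :=
  exists (f : G -> H) (g : H -> G),
    is_hom G H f /\ (forall x, g (f x) = x) /\ (forall y, f (g y) = y).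

Definition class_of_groups (P : group -> Prop) : Prop :=
  forall G H, isomorphic G H -> P G -> P H.

Definition is_subgroup (G : group) (H : G -> Prop) : Prop :=
  H one /\ (forall x y, H x -> H y -> H (mul x y)) /\ (forall x, H x -> H (inv x)).

Definition is_normal (G : group) (H : G -> Prop) : Prop :=
  is_subgroup G H /\ (forall g h, H h -> H (mul (inv g) (mul h g))).

Lemma normal_subgroup (G : group) (H : G -> Prop) : is_normal G H -> is_subgroup G H.
Proof. intros [h _]; exact h. Qed.

Section SubGroup.
Variables (G : group) (H : G -> Prop) (HS : is_subgroup G H).

Definition sg_mul (x y : {x : G | H x}) : {x : G | H x} :=
  exist _ (mul (proj1_sig x) (proj1_sig y))
    (proj1 (proj2 HS) _ _ (proj2_sig x) (proj2_sig y)).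
Definition sg_one : {x : G | H x} := exist _ one (proj1 HS).
Definition sg_inv (x : {x : G | H x}) : {x : G | H x} :=
  exist _ (inv (proj1_sig x)) (proj2 (proj2 HS) _ (proj2_sig x)).

Lemma sg_eq (x y : {x : G | H x}) : proj1_sig x = proj1_sig y -> x = y.
Proof.
  destruct x as [x hx], y as [y hy]; simpl; intros ->.
  f_equal; apply proof_irrelevance.
Qed.

Definition sub_group : group.
Proof.
  refine (@Group {x : G | H x} sg_mul sg_one sg_inv _ _ _ _ _);
  intros; apply sg_eq; simpl.
  - apply mulA.
  - apply mul1g.
  - apply mulg1.
  - apply mulVg.
  - apply mulgV.
Defined.
End SubGroup.

Definition prod_group (G H : group) : group.
Proof.
  refine (@Group (G * H)%type
            (fun x y => (mul (fst x) (fst y), mul (snd x) (snd y)))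
            (one, one) (fun x => (inv (fst x), inv (snd x))) _ _ _ _ _);
  intros; simpl; f_equal; auto using mulA, mul1g, mulg1, mulVg, mulgV.
  all: destruct x; simpl; f_equal; auto using mul1g, mulg1, mulVg, mulgV.
Defined.

(* "G/N belongs to P": some group in P is the image of a surjective
   homomorphism of G whose kernel is exactly N (first isomorphism theorem;
   P is closed under isomorphism). *)
Definition quot_in (P : group -> Prop) (G : group) (N : G -> Prop) : Prop :=
  exists (Q : group) (f : G -> Q),
    P Q /\ is_hom G Q f /\ surj f /\ (forall x, f x = one <-> N x).

Definition residually (P : group -> Prop) (G : group) : Prop :=
  forall g : G, g <> one ->
    exists (Q : group) (f : G -> Q), P Q /\ is_hom G Q f /\ surj f /\ f g <> one.

Definition root_class (R : group -> Prop) : Prop :=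
  class_of_groups R
  /\ (exists G : group, R G /\ exists g : G, g <> one)
  /\ (forall (G : group) (H : G -> Prop) (HS : is_subgroup G H),
        R G -> R (sub_group G H HS))
  /\ (forall G H : group, R G -> R H -> R (prod_group G H))
  (* Gruenberg condition *)
  /\ (forall (G : group) (H K : G -> Prop) (HN : is_normal G H),
        (forall x, K x -> H x) ->
        is_normal (sub_group G H (normal_subgroup G H HN))
                  (fun x => K (proj1_sig x)) ->
        quot_in R G H ->
        quot_in R (sub_group G H (normal_subgroup G H HN))
                  (fun x => K (proj1_sig x)) ->
        exists L : G -> Prop,
          is_normal G L /\ (forall x, L x -> K x) /\ quot_in R G L).

Definition by_class (A B : group -> Prop) (G : group) : Prop :=
  exists (N : G -> Prop) (HN : is_normal G N),
    A (sub_group G N (normal_subgroup G N HN)) /\ quot_in B G N.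

Definition equipotent (A B : Type) : Prop :=
  exists (f : A -> B) (g : B -> A), (forall x, g (f x) = x) /\ (forall y, f (g y) = y).

(* The Kaloujnine–Krasner embedding.  Let f : G -> Q with kernel N and Q in C,
   and let g <> 1.  If g is outside N, f already separates it.  Otherwise take
   phi : N -> S with S in R and phi g <> 1; via a transversal of N, G maps into
   the unrestricted wreath product S wr Q (the semidirect product S^Q ⋊ Q), and
   the image of g is nontrivial.  That image is R-by-C: the projection to Q has
   image Q and kernel inside S^Q.  Finally S^Q is in R because |Q| = |H| with H
   in R, and S^H embeds in S wr H, which lies in R by the Gruenberg condition
   applied to S wr H > S^H > (point stabiliser at 1): the largest normal
   subgroup of S wr H inside that stabiliser is trivial. *)
From Stdlib Require Import ProofIrrelevance FunctionalExtensionality Classical ClassicalEpsilon.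

Arguments mulA {g} x y z.
Arguments mul1g {g} x.
Arguments mulg1 {g} x.
Arguments mulVg {g} x.
Arguments mulgV {g} x.

Section GroupFacts.
Variable G : group.

Lemma mulIg (a x y : G) : mul a x = mul a y -> x = y.
Proof.
  intro h. rewrite <- (mul1g x), <- (mulVg a), <- mulA, h, mulA, mulVg, mul1g.
  reflexivity.
Qed.

Lemma mulgI (a x y : G) : mul x a = mul y a -> x = y.
Proof.
  intro h. rewrite <- (mulg1 x), <- (mulgV a), mulA, h, <- mulA, mulgV, mulg1.
  reflexivity.
Qed.

Lemma eq_mulgV1 (x y : G) : mul x (inv y) = one -> x = y.
Proof. intro h. apply (mulgI (inv y)). rewrite h, mulgV. reflexivity. Qed.

Lemma invg1 : inv (@one G) = one.
Proof. rewrite <- (mul1g (inv one)); apply mulgV. Qed.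

Lemma invgK (x : G) : inv (inv x) = x.
Proof. apply eq_mulgV1; apply mulVg. Qed.

Lemma mulgVK (a b : G) : mul (mul a (inv b)) b = a.
Proof. rewrite <- mulA, mulVg, mulg1. reflexivity. Qed.

Lemma conjg_eq1 (a b : G) : mul a (mul b (inv a)) = one -> b = one.
Proof.
  intro h. apply (mulIg a). rewrite mulg1. apply (mulgI (inv a)).
  rewrite <- mulA, h, mulgV. reflexivity.
Qed.

End GroupFacts.

Section Homomorphisms.
Variables (G H : group) (f : G -> H) (fh : is_hom G H f).

Lemma hom1 : f one = one.
Proof.
  apply (mulIg _ (f one)). rewrite <- fh, !mulg1. reflexivity.
Qed.

Lemma homV (x : G) : f (inv x) = inv (f x).
Proof. apply eq_mulgV1. rewrite invgK, <- fh, mulVg. exact hom1. Qed.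

Definition image : H -> Prop := fun y => exists x, f x = y.

Lemma image_subgroup : is_subgroup H image.
Proof.
  split; [|split].
  - exists one. exact hom1.
  - intros a b [x <-] [y <-]. exists (mul x y). apply fh.
  - intros a [x <-]. exists (inv x). apply homV.
Qed.

Definition image_group : group := sub_group H image image_subgroup.

Definition onto_image (x : G) : image_group := exist image (f x) (ex_intro _ x eq_refl).

Lemma onto_image_hom : is_hom G image_group onto_image.
Proof. intros x y. apply sg_eq. apply fh. Qed.

Lemma onto_image_surj : surj onto_image.
Proof. intros [y [x hx]]. exists x. apply sg_eq. exact hx. Qed.

Lemma kernel_normal : is_normal G (fun x => f x = one).
Proof.
  split; [split; [|split]|].
  - exact hom1.
  - intros x y h1 h2. rewrite fh, h1, h2, mul1g. reflexivity.
  - intros x h. rewrite homV, h. apply invg1.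
  - intros g h e. rewrite !fh, e, mul1g, <- fh, mulVg. exact hom1.
Qed.

End Homomorphisms.

Section ClosedUnderSubgroups.
Variable R : group -> Prop.
Hypothesis R_iso : class_of_groups R.
Hypothesis R_sub : forall (G : group) (H : G -> Prop) (HS : is_subgroup G H),
  R G -> R (sub_group G H HS).

Lemma injective_hom_closed (X Y : group) (j : X -> Y) :
  is_hom X Y j -> (forall a b, j a = j b -> a = b) -> R Y -> R X.
Proof.
  intros jh jinj RY.
  apply (R_iso (image_group X Y j jh)); [| apply R_sub; exact RY].
  pose (pre := fun y : image_group X Y j jh =>
                 proj1_sig (constructive_indefinite_description _ (proj2_sig y))).
  assert (preE : forall y, j (pre y) = proj1_sig y).
  { intro y. unfold pre. destruct (constructive_indefinite_description _ _) as [x e].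
    exact e. }
  exists pre, (onto_image X Y j jh).
  split; [|split].
  - intros a b. apply jinj. rewrite jh, !preE. reflexivity.
  - intro y. apply sg_eq. apply preE.
  - intro x. apply jinj. apply preE.
Qed.

Lemma quot_in_trivial_kernel (G : group) (L : G -> Prop) :
  (forall z, L z -> z = one) -> quot_in R G L -> R G.
Proof.
  intros Ltriv [Q [f [RQ [fh [_ fk]]]]].
  apply (injective_hom_closed G Q f fh); [|exact RQ].
  intros a b e. apply eq_mulgV1, Ltriv, fk.
  rewrite fh, (homV _ _ _ fh), e. apply mulgV.
Qed.

End ClosedUnderSubgroups.

Definition pow_group (S : group) (A : Type) : group.
Proof.
  refine (@Group (A -> S) (fun F G x => mul (F x) (G x)) (fun _ => one)
            (fun F x => inv (F x)) _ _ _ _ _);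
  intros; apply functional_extensionality; intros;
  auto using mulA, mul1g, mulg1, mulVg, mulgV.
Defined.

(* Unrestricted wreath product S^T ⋊ T, with T acting on S^T by right translation. *)
Definition wreath_mul {S T : group} (u v : (T -> S) * T) : (T -> S) * T :=
  (fun x => mul (fst u x) (fst v (mul x (snd u))), mul (snd u) (snd v)).
Definition wreath_inv {S T : group} (u : (T -> S) * T) : (T -> S) * T :=
  (fun y => inv (fst u (mul y (inv (snd u)))), inv (snd u)).

Definition wreath (S T : group) : group.
Proof.
  refine (@Group ((T -> S) * T)%type wreath_mul (fun _ => one, one) wreath_inv
            _ _ _ _ _).
  - intros [F a] [G b] [K c]; unfold wreath_mul; simpl; f_equal;
      [apply functional_extensionality; intro; rewrite !mulA; reflexivity | apply mulA].
  - intros [F a]; unfold wreath_mul; simpl; f_equal;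
      [apply functional_extensionality; intro; rewrite mul1g, mulg1; reflexivity
      | apply mul1g].
  - intros [F a]; unfold wreath_mul; simpl; f_equal;
      [apply functional_extensionality; intro; rewrite mulg1; reflexivity | apply mulg1].
  - intros [F a]; unfold wreath_mul, wreath_inv; simpl; f_equal;
      [apply functional_extensionality; intro; apply mulVg | apply mulVg].
  - intros [F a]; unfold wreath_mul, wreath_inv; simpl; f_equal;
      [apply functional_extensionality; intro; rewrite <- (mulA x a), mulgV, mulg1;
       apply mulgV
      | apply mulgV].
Defined.

Section WreathProduct.
Variables S T : group.

Definition wreath_top (w : wreath S T) : T := snd w.

Lemma wreath_top_hom : is_hom (wreath S T) T wreath_top.
Proof. intros x y; reflexivity. Qed.

Definition wreath_base (w : wreath S T) : Prop := wreath_top w = one.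

Definition wreath_base_normal : is_normal (wreath S T) wreath_base :=
  kernel_normal _ _ _ wreath_top_hom.

Definition base_group : group :=
  sub_group (wreath S T) wreath_base (normal_subgroup _ _ wreath_base_normal).

Definition base_stab1 (w : wreath S T) : Prop := wreath_base w /\ fst w one = one.

Lemma base_stab1_normal :
  is_normal base_group (fun w => base_stab1 (proj1_sig w)).
Proof.
  unfold base_stab1.
  split; [split; [|split]|].
  - split; reflexivity.
  - intros [[F a] ha] [[G b] hb] [_ h1] [_ h2];
      unfold wreath_base, wreath_top in *; simpl in *; subst.
    split; simpl; [apply mul1g|]. rewrite mul1g, h1, h2. apply mul1g.
  - intros [[F a] ha] [_ h1]; unfold wreath_base, wreath_top in *; simpl in *; subst.
    split; simpl; [apply invg1|]. rewrite invg1, mul1g, h1. apply invg1.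
  - intros [[G b] hb] [[F a] ha] [_ h1];
      unfold wreath_base, wreath_top in *; simpl in *; subst.
    split; simpl; rewrite invg1, !mul1g; [reflexivity|rewrite h1, mul1g; apply mulVg].
Qed.

Lemma base_to_pow_hom :
  is_hom base_group (pow_group S T) (fun w => fst (proj1_sig w)).
Proof.
  intros [[F a] ha] [[G b] hb]; unfold wreath_base, wreath_top in *; simpl in *; subst.
  apply functional_extensionality; intro x. simpl. rewrite mulg1. reflexivity.
Qed.

(* Conjugating by (1, x^-1) moves the coordinate at x to the coordinate at 1. *)
Lemma normal_in_base_stab1_trivial (L : wreath S T -> Prop) :
  is_normal (wreath S T) L -> (forall z, L z -> base_stab1 z) ->
  forall z, L z -> z = one.
Proof.
  intros LN LK [F a] hz. destruct (LK _ hz) as [ha _].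
  unfold wreath_base, wreath_top in ha; simpl in ha; subst.
  simpl. f_equal. apply functional_extensionality; intro x.
  destruct (LK _ (proj2 LN (fun _ => one, inv x) _ hz)) as [_ h].
  simpl in h. rewrite invg1, mul1g, mulg1, invgK, mul1g in h. exact h.
Qed.

End WreathProduct.

Section RootClass.
Variable R : group -> Prop.
Hypothesis rootR : root_class R.

Let R_iso : class_of_groups R := proj1 rootR.
Let R_sub := proj1 (proj2 (proj2 rootR)).
Let R_gruenberg := proj2 (proj2 (proj2 (proj2 rootR))).

Lemma root_class_wreath (S T : group) : R S -> R T -> R (wreath S T).
Proof.
  intros RS RT.
  destruct (R_gruenberg (wreath S T) (wreath_base S T) (base_stab1 S T)
              (wreath_base_normal S T))
    as [L [LN [LK RL]]].
  - intros x [h _]; exact h.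
  - apply base_stab1_normal.
  - exists T, (wreath_top S T). split; [exact RT|split; [apply wreath_top_hom|split]].
    + intro y. exists (fun _ => one, y). reflexivity.
    + intro x. reflexivity.
  - exists S, (fun w => fst (proj1_sig w) one). split; [exact RS|split; [|split]].
    + intros x y. exact (equal_f (base_to_pow_hom S T x y) one).
    + intro y. exists (exist (wreath_base S T) (fun _ => y, one) eq_refl). reflexivity.
    + intros [w hw]; simpl. unfold base_stab1. tauto.
  - apply (quot_in_trivial_kernel R R_iso R_sub _ L); [|exact RL].
    exact (normal_in_base_stab1_trivial S T L LN LK).
Qed.

Lemma root_class_pow (S T : group) : R S -> R T -> R (pow_group S T).
Proof.
  intros RS RT.
  apply (injective_hom_closed R R_iso R_sub _ (wreath S T)
           (fun F : pow_group S T => (F : T -> S, one : T) : wreath S T));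
    [| | exact (root_class_wreath S T RS RT)].
  - intros F G. simpl. unfold wreath_mul. simpl. f_equal; [|symmetry; apply mul1g].
    apply functional_extensionality; intro x. rewrite mulg1. reflexivity.
  - intros F G e. injection e. auto.
Qed.

Lemma root_class_pow_equipotent (S T : group) (A : Type) :
  R S -> R T -> equipotent A (carrier T) -> R (pow_group S A).
Proof.
  intros RS RT [e [e' [e'e _]]].
  apply (injective_hom_closed R R_iso R_sub _ (pow_group S T)
           (fun F : pow_group S A => (fun h => (F : A -> S) (e' h)) : pow_group S T));
    [| | exact (root_class_pow S T RS RT)].
  - intros F G. reflexivity.
  - intros F G h. apply functional_extensionality; intro q.
    rewrite <- (e'e q). exact (equal_f h (e q)).
Qed.

Lemma wreath_image_by (C : group -> Prop) (G S T : group) (psi : G -> wreath S T)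
    (psih : is_hom G (wreath S T) psi) :
  R (pow_group S T) -> C T -> surj (fun x => wreath_top S T (psi x)) ->
  by_class R C (image_group G (wreath S T) psi psih).
Proof.
  intros RP CT top_surj.
  pose (W := image_group G (wreath S T) psi psih).
  pose (top := fun w : W => wreath_top S T (proj1_sig w)).
  assert (toph : is_hom W T top) by (intros x y; reflexivity).
  pose (KN := kernel_normal W T top toph).
  exists (fun w => top w = one), KN. split.
  - apply (injective_hom_closed R R_iso R_sub _ (pow_group S T)
             (fun w : sub_group W _ (normal_subgroup _ _ KN) =>
                fst (proj1_sig (proj1_sig w)))); [| |exact RP].
    + intros [[x hx] hx1] [[y hy] hy1].
      exact (base_to_pow_hom S T (exist _ x hx1) (exist _ y hy1)).
    + intros [[[F a] h1] h2] [[[F' a'] h1'] h2'];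
        unfold top, wreath_top in h2, h2'; simpl in h2, h2'; subst.
      simpl. intro e; subst. rewrite (proof_irrelevance _ h1 h1'). f_equal.
  - exists T, top. split; [exact CT|split; [exact toph|split]].
    + intro q. destruct (top_surj q) as [x hx]. exists (onto_image _ _ psi psih x). exact hx.
    + intro x. reflexivity.
Qed.

End RootClass.

Section KaloujnineKrasner.
Variables (G Q S : group) (N : G -> Prop) (HN : is_normal G N).
Variables (f : G -> Q) (phi : sub_group G N (normal_subgroup G N HN) -> S).
Hypotheses (fh : is_hom G Q f) (fs : surj f) (fk : forall x, f x = one <-> N x).
Hypothesis phih : is_hom _ _ phi.

Let N_mul := proj1 (proj2 (proj1 HN)).

(* Outside N the value is junk; only values on N are ever used. *)
Definition ext_phi (y : G) : S :=
  match excluded_middle_informative (N y) with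
  | left p => phi (exist _ y p)
  | right _ => one
  end.

Lemma ext_phiE (y : G) (p : N y) : ext_phi y = phi (exist _ y p).
Proof.
  unfold ext_phi. destruct (excluded_middle_informative (N y)) as [p'|n].
  - f_equal. apply sg_eq. reflexivity.
  - contradiction.
Qed.

Lemma ext_phiM (a b : G) : N a -> N b -> ext_phi (mul a b) = mul (ext_phi a) (ext_phi b).
Proof.
  intros pa pb.
  rewrite (ext_phiE _ (N_mul a b pa pb)), (ext_phiE _ pa), (ext_phiE _ pb), <- phih.
  f_equal. apply sg_eq. reflexivity.
Qed.

Definition transversal (q : Q) : G :=
  proj1_sig (constructive_indefinite_description _ (fs q)).

Lemma transversalE (q : Q) : f (transversal q) = q.
Proof.
  unfold transversal. destruct (constructive_indefinite_description _ _) as [x e]. exact e.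
Qed.

Definition kk_cocycle (x : G) (q : Q) : G :=
  mul (transversal q) (mul x (inv (transversal (mul q (f x))))).

Lemma kk_cocycle_in_N (x : G) (q : Q) : N (kk_cocycle x q).
Proof.
  apply fk. unfold kk_cocycle.
  rewrite !fh, (homV _ _ _ fh), !transversalE, mulA, mulgV. reflexivity.
Qed.

Definition kk_map (x : G) : wreath S Q := (fun q => ext_phi (kk_cocycle x q), f x).

Lemma kk_map_hom : is_hom G (wreath S Q) kk_map.
Proof.
  intros x y. unfold kk_map. simpl. unfold wreath_mul. simpl. f_equal; [|apply fh].
  apply functional_extensionality; intro q.
  rewrite <- ext_phiM by apply kk_cocycle_in_N. f_equal. unfold kk_cocycle.
  rewrite fh, (mulA q (f x) (f y)), !mulA, mulgVK. reflexivity.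
Qed.

(* The coordinate of kk_map g at 1 is a conjugate of phi g. *)
Lemma kk_map_neq1 (g : G) (Ng : N g) : phi (exist _ g Ng) <> one -> kk_map g <> one.
Proof.
  intros phig e. apply phig. rewrite <- (ext_phiE _ Ng).
  pose (t := transversal one).
  assert (Nt : N t) by (apply fk, transversalE).
  assert (NtV : N (inv t)) by exact (proj2 (proj2 (proj1 HN)) _ Nt).
  assert (ext_phiV : ext_phi (inv t) = inv (ext_phi t)).
  { apply (mulIg _ (ext_phi t)). rewrite <- ext_phiM, mulgV, mulgV by assumption.
    rewrite (ext_phiE _ (proj1 (proj1 HN))), <- (hom1 _ _ _ phih).
    f_equal. apply sg_eq. reflexivity. }
  apply (conjg_eq1 _ (ext_phi t)). rewrite <- ext_phiV, <- !ext_phiM; try assumption.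
  - apply (f_equal (fun w => fst w one)) in e. simpl in e.
    unfold kk_cocycle in e. rewrite (proj2 (fk g) Ng), mulg1 in e. exact e.
  - exact (N_mul _ _ Ng NtV).
Qed.

End KaloujnineKrasner.

Theorem lemma3p3 (C R : group -> Prop) :
  class_of_groups C ->
  root_class R ->
  (forall G, R G -> C G) ->
  (forall G, by_class R C G -> C G) ->
  (forall G, C G -> exists H, R H /\ equipotent (carrier G) (carrier H)) ->
  forall (G : group) (N : G -> Prop) (HN : is_normal G N),
    residually R (sub_group G N (normal_subgroup G N HN)) ->
    quot_in C G N ->
    residually C G.
Proof.
  intros _ rootR _ byC card G N HN resN [Q [f [CQ [fh [fs fk]]]]] g gne.
  destruct (classic (N g)) as [Ng | nNg].
  2: { exists Q, f. repeat split; auto. intro e. apply nNg, fk, e. }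
  destruct (resN (exist _ g Ng)) as [S [phi [RS [phih [_ phig]]]]].
  { intro e. apply gne. exact (f_equal (@proj1_sig _ _) e). }
  destruct (card Q CQ) as [H [RH QH]].
  pose (psih := kk_map_hom G Q S N HN f phi fh fs fk phih).
  exists (image_group _ _ _ psih), (onto_image _ _ _ psih).
  split; [|split; [apply onto_image_hom|split; [apply onto_image_surj|]]].
  - apply byC, wreath_image_by; [exact rootR| |exact CQ|].
    + exact (root_class_pow_equipotent R rootR S H Q RS RH QH).
    + intro q. exists (transversal G Q f fs q). apply transversalE.
  - intro e. apply (kk_map_neq1 G Q S N HN f phi fs fk phih g Ng phig).
    exact (f_equal (@proj1_sig _ _) e).
Qed.
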